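(* Let $H=(v_1,\dots,v_6)$ be an embedded equilateral hexagon in standard position whose action-angle coordinates $(d_1,d_2,d_3,\theta_1,\theta_2,\theta_3)$ for the $T_{135}$ triangulation are defined, and let $d=\sqrt{2d_1^2d_2^2+2d_1^2d_3^2+2d_2^2d_3^2-d_1^4-d_2^4-d_3^4}$. If $J(H)=(-1,1)$, then $f_i<0$, $g_i>0$ and $h_i>0$ for all $i\in\{1,2,3\}$, where \begin{align*} f_1= & d_2\sqrt{4-d_2^2}\sin\theta_2\big(d_3d-(d_1^2-d_2^2+d_3^2)\sqrt{4-d_3^2}\cos\theta_3\big)- d_3\sqrt{4-d_3^2}\sin\theta_3\big(d_2d-(d_1^2+d_2^2-d_3^2)\sqrt{4-d_2^2}\cos\theta_2\big),\\ g_1= & \sqrt{4-d_2^2}\Big(\tfrac{-d_1^2+d_2^2+d_3^2}{2d_2 d_3}\cos\theta_2\sin\theta_3+\sin\theta_2\cos\theta_3\Big)-\tfrac{d\sin\theta_3}{2d_3},\\ h_1= & \sqrt{4-d_3^2}\Big(\tfrac{-d_1^2+d_2^2+d_3^2}{2d_2 d_3}\cos\theta_3\sin\theta_2+\sin\theta_3\cos\theta_2\Big)-\tfrac{d\sin\theta_2}{2d_2},\\ f_2 = & d_3\sqrt{4-d_3^2}\sin\theta_3\big(d_1d-(d_1^2+d_2^2-d_3^2)\sqrt{4-d_1^2}\cos\theta_1\big)- d_1\sqrt{4-d_1^2}\sin\theta_1\big(d_3d-(-d_1^2+d_2^2+d_3^2)\sqrt{4-d_3^2}\cos\theta_3\big),\\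 g_2 = &\sqrt{4-d_3^2}\Big(\tfrac{d_1^2-d_2^2+d_3^2}{2d_1 d_3}\cos\theta_3\sin\theta_1+\sin\theta_3\cos\theta_1\Big)-\tfrac{d\sin\theta_1}{2d_1},\\ h_2 = &\sqrt{4-d_1^2}\Big(\tfrac{d_1^2-d_2^2+d_3^2}{2d_1 d_3}\cos\theta_1\sin\theta_3+\sin\theta_1\cos\theta_3\Big)-\tfrac{d\sin\theta_3}{2d_3},\\ f_3 = & d_1\sqrt{4-d_1^2}\sin\theta_1\big(d_2d-(-d_1^2+d_2^2+d_3^2)\sqrt{4-d_2^2}\cos\theta_2\big)-d_2\sqrt{4-d_2^2}\sin\theta_2\big(d_1d-(d_1^2-d_2^2+d_3^2)\sqrt{4-d_1^2}\cos\theta_1\big),\\ g_3 = &\sqrt{4-d_1^2}\Big(\tfrac{d_1^2+d_2^2-d_3^2}{2d_1 d_2}\cos\theta_1\sin\theta_2+\sin\theta_1\cos\theta_2\Big)-\tfrac{d\sin\theta_2}{2d_2},\\ h_3 = &\sqrt{4-d_2^2}\Big( \tfrac{d_1^2+d_2^2-d_3^2}{2d_1 d_2}\cos\theta_2\sin\theta_1+\sin\theta_2\cos\theta_1\Big)-\tfrac{d\sin\theta_1}{2d_1}. \end{align*}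
   Context: An equilateral hexagon is an ordered 6-tuple $H=(v_1,\dots,v_6)$ in $\mathbb{R}^3$ with $\|v_i-v_{i+1}\|=1$ (indices mod 6), edges $e_i=[v_i,v_{i+1}]$, oriented $v_1\to v_2\to\cdots\to v_6\to v_1$; embedded means non-adjacent edges are disjoint and adjacent ones meet only at their common endpoint. Standard position: $v_1=0$, $v_3$ on the positive $x$-axis, $v_5$ in the $xy$-plane with positive $y$-coordinate. Action-angle coordinates ($T_{135}$ triangulation), defined when $v_1,v_3,v_5$ are not collinear and $0<d_i<2$: $d_1=\|v_3-v_1\|$, $d_2=\|v_5-v_3\|$, $d_3=\|v_1-v_5\|$; with $m_1,m_2,m_3$ the midpoints of $[v_1,v_3],[v_3,v_5],[v_5,v_1]$, $u_1,u_2,u_3$ the unit vectors in the $xy$-plane perpendicular to these segments pointing toward the opposite vertex of triangle $v_1v_3v_5$ (toward $v_5,v_1,v_3$ respectively), and $e_z=(0,0,1)$, the angles $\theta_i\in[0,2\pi)$ are determined by $v_{2i}=m_i+\tfrac12\sqrt{4-d_i^2}(\cos\theta_i\,u_i+\sin\theta_i\,e_z)$ (regular planar hexagon: all $\theta_i=\pi$). Explicitly $v_3=(d_1,0,0)$, $v_5=\big(\tfrac{d_1^2-d_2^2+d_3^2}{2d_1},\tfrac{d}{2d_1},0\big)$, $v_2=\big(\tfrac{d_1}{2},\tfrac12\sqrt{4-d_1^2}\cos\theta_1,\tfrac12\sqrt{4-d_1^2}\sin\theta_1\big)$. Joint Chirality-Curl: $curl(H)=\operatorname{sign}\big((v_3-v_1)\times(v_5-v_1)\cdot(v_2-v_1)\big)$.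 For $i=2,4,6$, $T_i$ is the open triangular disk with vertices $v_{i-1},v_i,v_{i+1}$, oriented by the right-hand rule (normal $(v_i-v_{i-1})\times(v_{i+1}-v_i)$), and $\Delta_i$ is the algebraic intersection number of $T_i$ with the oriented polygon $H$. Then $J(H)=(\Delta_2\Delta_4\Delta_6,\ \Delta_2^2\Delta_4^2\Delta_6^2\,curl(H))$. *)

From Stdlib Require Import Reals Lra Lia ZArith ClassicalEpsilon.
Open Scope R_scope.

Definition vec := (R * R * R)%type.
Definition vx (v : vec) : R := fst (fst v).
Definition vy (v : vec) : R := snd (fst v).
Definition vz (v : vec) : R := snd v.
Definition mkv (x y z : R) : vec := (x, y, z).
Definition vadd (a b : vec) : vec := mkv (vx a + vx b) (vy a + vy b) (vz a + vz b).
Definition vsub (a b : vec) : vec := mkv (vx a - vx b) (vy a - vy b) (vz a - vz b).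
Definition vscale (k : R) (a : vec) : vec := mkv (k * vx a) (k * vy a) (k * vz a).
Definition dot (a b : vec) : R := vx a * vx b + vy a * vy b + vz a * vz b.
Definition cross (a b : vec) : vec :=
  mkv (vy a * vz b - vz a * vy b) (vz a * vx b - vx a * vz b) (vx a * vy b - vy a * vx b).
Definition vnorm (a : vec) : R := sqrt (dot a a).
Definition vdist (a b : vec) : R := vnorm (vsub a b).
Definition e_z : vec := mkv 0 0 1.
Definition midpoint (a b : vec) : vec := vscale (1/2) (vadd a b).

Definition Rsign (x : R) : Z :=
  if Rlt_dec 0 x then 1%Z else if Rlt_dec x 0 then (-1)%Z else 0%Z.

Record hexagon := Hex { hv1 : vec; hv2 : vec; hv3 : vec; hv4 : vec; hv5 : vec; hv6 : vec }.

(* vertex v_i, indices taken mod 6 (v_0 = v_6, v_7 = v_1, ...) *)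
Definition vert (H : hexagon) (i : nat) : vec :=
  match Nat.modulo i 6 with
  | 1%nat => hv1 H | 2%nat => hv2 H | 3%nat => hv3 H
  | 4%nat => hv4 H | 5%nat => hv5 H | _ => hv6 H
  end.

Definition on_seg (a b p : vec) : Prop :=
  exists t, 0 <= t <= 1 /\ p = vadd a (vscale t (vsub b a)).

Definition on_edge (H : hexagon) (i : nat) (p : vec) : Prop :=
  on_seg (vert H i) (vert H (S i)) p.

Definition equilateral (H : hexagon) : Prop :=
  forall i : nat, (1 <= i <= 6)%nat -> vdist (vert H i) (vert H (S i)) = 1.

(* non-adjacent edges are disjoint; adjacent edges e_i, e_{i+1} meet only at v_{i+1} *)
Definition embedded (H : hexagon) : Prop :=
  (forall i j : nat, (1 <= i <= 6)%nat -> (1 <= j <= 6)%nat ->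
     (2 <= Nat.modulo (j + 6 - i) 6 <= 4)%nat ->
     forall p, ~ (on_edge H i p /\ on_edge H j p)) /\
  (forall i : nat, (1 <= i <= 6)%nat ->
     forall p, on_edge H i p -> on_edge H (S i) p -> p = vert H (S i)).

Definition standard_position (H : hexagon) : Prop :=
  hv1 H = mkv 0 0 0 /\
  0 < vx (hv3 H) /\ vy (hv3 H) = 0 /\ vz (hv3 H) = 0 /\
  0 < vy (hv5 H) /\ vz (hv5 H) = 0.

Definition dg1 (H : hexagon) : R := vdist (hv3 H) (hv1 H).
Definition dg2 (H : hexagon) : R := vdist (hv5 H) (hv3 H).
Definition dg3 (H : hexagon) : R := vdist (hv1 H) (hv5 H).

Definition collinear (a b c : vec) : Prop := cross (vsub b a) (vsub c a) = mkv 0 0 0.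

Definition aa_defined (H : hexagon) : Prop :=
  ~ collinear (hv1 H) (hv3 H) (hv5 H) /\
  0 < dg1 H < 2 /\ 0 < dg2 H < 2 /\ 0 < dg3 H < 2.

(* unit vector perpendicular to segment [a,b], in the plane of a,b,c,
   pointing toward the opposite vertex c *)
Definition perp_toward (a b c : vec) : vec :=
  let w := vsub (vsub c a) (vscale (dot (vsub c a) (vsub b a) / dot (vsub b a) (vsub b a)) (vsub b a)) in
  vscale (/ vnorm w) w.

Definition angle_rep (a b c p : vec) (dist th : R) : Prop :=
  p = vadd (midpoint a b)
           (vscale (/2 * sqrt (4 - dist ^ 2))
                   (vadd (vscale (cos th) (perp_toward a b c)) (vscale (sin th) e_z))).

Definition is_angles (H : hexagon) (t1 t2 t3 : R) : Prop :=
  0 <= t1 < 2 * PI /\ 0 <= t2 < 2 * PI /\ 0 <= t3 < 2 * PI /\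
  angle_rep (hv1 H) (hv3 H) (hv5 H) (hv2 H) (dg1 H) t1 /\
  angle_rep (hv3 H) (hv5 H) (hv1 H) (hv4 H) (dg2 H) t2 /\
  angle_rep (hv5 H) (hv1 H) (hv3 H) (hv6 H) (dg3 H) t3.

Definition curl (H : hexagon) : Z :=
  Rsign (dot (cross (vsub (hv3 H) (hv1 H)) (vsub (hv5 H) (hv1 H))) (vsub (hv2 H) (hv1 H))).

Definition in_open_tri (a b c p : vec) : Prop :=
  exists al be ga, 0 < al /\ 0 < be /\ 0 < ga /\ al + be + ga = 1 /\
    p = vadd (vscale al a) (vadd (vscale be b) (vscale ga c)).

Definition decP (P : Prop) : bool :=
  if excluded_middle_informative P then true else false.

(* Signed contribution of the oriented edge a -> b to the intersection number
   with the oriented open triangle (a0,a1,a2), normal n = (a1-a0) x (a2-a1).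
   Heights ha, hb are signed distances (times |n|) to the plane of the
   triangle. A crossing from the negative to the non-negative side counts +1,
   from the non-negative to the negative side counts -1 (half-open convention,
   which gives the correct count also when the polygon passes through the
   plane at a vertex), provided the crossing point lies in the open triangle. *)
Definition edge_contrib (a0 a1 a2 a b : vec) : Z :=
  let n := cross (vsub a1 a0) (vsub a2 a1) in
  let ha := dot n (vsub a a1) in
  let hb := dot n (vsub b a1) in
  let p := vadd a (vscale (ha / (ha - hb)) (vsub b a)) in
  if Rlt_dec ha 0 then
    (if Rle_dec 0 hb then (if decP (in_open_tri a0 a1 a2 p) then 1%Z else 0%Z) else 0%Z)
  else
    (if Rlt_dec hb 0 then (if decP (in_open_tri a0 a1 a2 p) then (-1)%Z else 0%Z) else 0%Z).

(* Delta_i : algebraic intersection number of T_i = (v_{i-1}, v_i, v_{i+1})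
   with the oriented polygon H (sum over the six oriented edges e_1..e_6). *)
Definition Delta (H : hexagon) (i : nat) : Z :=
  let a0 := vert H (Nat.pred i) in
  let a1 := vert H i in
  let a2 := vert H (S i) in
  (edge_contrib a0 a1 a2 (vert H 1) (vert H 2) +
   edge_contrib a0 a1 a2 (vert H 2) (vert H 3) +
   edge_contrib a0 a1 a2 (vert H 3) (vert H 4) +
   edge_contrib a0 a1 a2 (vert H 4) (vert H 5) +
   edge_contrib a0 a1 a2 (vert H 5) (vert H 6) +
   edge_contrib a0 a1 a2 (vert H 6) (vert H 7))%Z.

Definition JCC (H : hexagon) : Z * Z :=
  let D2 := Delta H 2 in let D4 := Delta H 4 in let D6 := Delta H 6 in
  ((D2 * D4 * D6)%Z, (D2 ^ 2 * D4 ^ 2 * D6 ^ 2 * curl H)%Z).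

Definition ddd (d1 d2 d3 : R) : R :=
  sqrt (2 * d1^2 * d2^2 + 2 * d1^2 * d3^2 + 2 * d2^2 * d3^2 - d1^4 - d2^4 - d3^4).


Definition f1 (d1 d2 d3 t1 t2 t3 : R) : R :=
  let d := ddd d1 d2 d3 in let s1 := sqrt (4 - d1^2) in
  let s2 := sqrt (4 - d2^2) in let s3 := sqrt (4 - d3^2) in
  d2 * s2 * sin t2 * (d3 * d - (d1^2 - d2^2 + d3^2) * s3 * cos t3)
  - d3 * s3 * sin t3 * (d2 * d - (d1^2 + d2^2 - d3^2) * s2 * cos t2).
Definition g1 (d1 d2 d3 t1 t2 t3 : R) : R :=
  let d := ddd d1 d2 d3 in let s1 := sqrt (4 - d1^2) in
  let s2 := sqrt (4 - d2^2) in let s3 := sqrt (4 - d3^2) in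
  s2 * ((- d1^2 + d2^2 + d3^2) / (2 * d2 * d3) * cos t2 * sin t3 + sin t2 * cos t3)
  - d * sin t3 / (2 * d3).
Definition h1 (d1 d2 d3 t1 t2 t3 : R) : R :=
  let d := ddd d1 d2 d3 in let s1 := sqrt (4 - d1^2) in
  let s2 := sqrt (4 - d2^2) in let s3 := sqrt (4 - d3^2) in
  s3 * ((- d1^2 + d2^2 + d3^2) / (2 * d2 * d3) * cos t3 * sin t2 + sin t3 * cos t2)
  - d * sin t2 / (2 * d2).
Definition f2 (d1 d2 d3 t1 t2 t3 : R) : R :=
  let d := ddd d1 d2 d3 in let s1 := sqrt (4 - d1^2) in
  let s2 := sqrt (4 - d2^2) in let s3 := sqrt (4 - d3^2) in
  d3 * s3 * sin t3 * (d1 * d - (d1^2 + d2^2 - d3^2) * s1 * cos t1)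
  - d1 * s1 * sin t1 * (d3 * d - (- d1^2 + d2^2 + d3^2) * s3 * cos t3).
Definition g2 (d1 d2 d3 t1 t2 t3 : R) : R :=
  let d := ddd d1 d2 d3 in let s1 := sqrt (4 - d1^2) in
  let s2 := sqrt (4 - d2^2) in let s3 := sqrt (4 - d3^2) in
  s3 * ((d1^2 - d2^2 + d3^2) / (2 * d1 * d3) * cos t3 * sin t1 + sin t3 * cos t1)
  - d * sin t1 / (2 * d1).
Definition h2 (d1 d2 d3 t1 t2 t3 : R) : R :=
  let d := ddd d1 d2 d3 in let s1 := sqrt (4 - d1^2) in
  let s2 := sqrt (4 - d2^2) in let s3 := sqrt (4 - d3^2) in
  s1 * ((d1^2 - d2^2 + d3^2) / (2 * d1 * d3) * cos t1 * sin t3 + sin t1 * cos t3)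
  - d * sin t3 / (2 * d3).
Definition f3 (d1 d2 d3 t1 t2 t3 : R) : R :=
  let d := ddd d1 d2 d3 in let s1 := sqrt (4 - d1^2) in
  let s2 := sqrt (4 - d2^2) in let s3 := sqrt (4 - d3^2) in
  d1 * s1 * sin t1 * (d2 * d - (- d1^2 + d2^2 + d3^2) * s2 * cos t2)
  - d2 * s2 * sin t2 * (d1 * d - (d1^2 - d2^2 + d3^2) * s1 * cos t1).
Definition g3 (d1 d2 d3 t1 t2 t3 : R) : R :=
  let d := ddd d1 d2 d3 in let s1 := sqrt (4 - d1^2) in
  let s2 := sqrt (4 - d2^2) in let s3 := sqrt (4 - d3^2) in
  s1 * ((d1^2 + d2^2 - d3^2) / (2 * d1 * d2) * cos t1 * sin t2 + sin t1 * cos t2)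
  - d * sin t2 / (2 * d2).
Definition h3 (d1 d2 d3 t1 t2 t3 : R) : R :=
  let d := ddd d1 d2 d3 in let s1 := sqrt (4 - d1^2) in
  let s2 := sqrt (4 - d2^2) in let s3 := sqrt (4 - d3^2) in
  s2 * ((d1^2 + d2^2 - d3^2) / (2 * d1 * d2) * cos t2 * sin t1 + sin t2 * cos t1)
  - d * sin t1 / (2 * d1).

(* J(H) = (-1, 1) means curl H = 1 and Delta_2 Delta_4 Delta_6 = -1.  In standard position
   v1, v3, v5 lie in the xy-plane, and each Delta_i only counts the two edges of H that avoid
   the vertices of T_i.  curl H = 1 puts v2 above that plane, and the Delta_i being nonzero
   then puts v4 and v6 above it too, so v5, v1, v3 lie on the positive sides of T_2, T_4,
   T_6.  An edge leaving the positive side of a triangle can only cross it negatively and an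
   edge arriving there only positively, and of two triangles sharing a vertex at most one is
   pierced by an edge of the other.  With Delta_2 Delta_4 Delta_6 = -1 this leaves a single
   pattern: e_5, e_1, e_3 cross T_2, T_4, T_6 negatively.  Each of these crossings fixes the
   signs of two heights over a triangle and of one oriented volume, and in action-angle
   coordinates these nine quantities are positive multiples of -g_i, -h_i and f_i. *)

From Pilot Require Import Defs.
From Stdlib Require Import Reals ZArith Lra Lia Nsatz ClassicalEpsilon.
Open Scope R_scope.

Definition height (a0 a1 a2 x : vec) : R := dot (cross (vsub a1 a0) (vsub a2 a1)) (vsub x a1).

Definition triple (a b c : vec) : R := dot a (cross b c).

Lemma vec_ext (u v : vec) : vx u = vx v -> vy u = vy v -> vz u = vz v -> u = v.
Proof. now destruct u as [[? ?] ?], v as [[? ?] ?]; unfold vx, vy, vz; simpl; intros -> -> ->. Qed.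

Ltac destruct_vecs := repeat match goal with
  | v : vec |- _ => let x := fresh "x" in let y := fresh "y" in let z := fresh "z" in
                    destruct v as [[x y] z] end.

Ltac unfold_vecs :=
  unfold height, triple, dot, cross, vsub, vadd, vscale, mkv, vx, vy, vz in *; cbn [fst snd] in *.

Ltac vec_eq_coords E := let E1 := fresh E in let E2 := fresh E in let E3 := fresh E in
  assert (E1 := f_equal vx E); assert (E2 := f_equal vy E); assert (E3 := f_equal vz E);
  clear E; unfold_vecs.

Ltac nsatz_eqs := repeat match goal with
  | H : ?a < ?b |- _ => clear H | H : ?a <= ?b |- _ => clear H
  | H : _ \/ _ |- _ => clear H | H : _ /\ _ |- _ => clear H | H : ?a <> ?b |- _ => clear H end;
  cbn [pow]; nsatz.

Lemma height_seg a0 a1 a2 a b l :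
  height a0 a1 a2 (vadd a (vscale l (vsub b a))) =
  (1 - l) * height a0 a1 a2 a + l * height a0 a1 a2 b.
Proof. destruct_vecs; unfold_vecs; ring. Qed.

Lemma height_bary a0 a1 a2 x y z al be ga : al + be + ga = 1 ->
  height a0 a1 a2 (vadd (vscale al x) (vadd (vscale be y) (vscale ga z))) =
  al * height a0 a1 a2 x + be * height a0 a1 a2 y + ga * height a0 a1 a2 z.
Proof. intros Hs; destruct_vecs; unfold_vecs; nsatz. Qed.

Lemma height_vertex a0 a1 a2 a : a = a0 \/ a = a1 \/ a = a2 -> height a0 a1 a2 a = 0.
Proof. destruct_vecs; intros [-> | [-> | ->]]; unfold_vecs; ring. Qed.

Lemma height_eq0_of_vertex_in_open_tri a0 a1 a2 q x :
  q = a0 \/ q = a1 \/ q = a2 -> in_open_tri a0 a1 a2 q -> height a0 a1 a2 x = 0.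
Proof.
  intros Hq [al [be [ga [Hal [Hbe [Hga [Hs Hp]]]]]]].
  destruct_vecs; destruct Hq as [Hq | [Hq | Hq]]; inversion Hq; subst; vec_eq_coords Hp.
  - apply (Rmult_eq_reg_l ga); [|lra]. nsatz_eqs.
  - apply (Rmult_eq_reg_l ga); [|lra]. nsatz_eqs.
  - apply (Rmult_eq_reg_l be); [|lra]. nsatz_eqs.
Qed.

Lemma edge_contrib_cases a0 a1 a2 a b :
  let ha := height a0 a1 a2 a in let hb := height a0 a1 a2 b in
  let p := vadd a (vscale (ha / (ha - hb)) (vsub b a)) in
  (edge_contrib a0 a1 a2 a b = 1%Z /\ ha < 0 /\ 0 <= hb /\ in_open_tri a0 a1 a2 p) \/
  (edge_contrib a0 a1 a2 a b = (-1)%Z /\ 0 <= ha /\ hb < 0 /\ in_open_tri a0 a1 a2 p) \/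
  edge_contrib a0 a1 a2 a b = 0%Z.
Proof.
  intros ha hb p. unfold edge_contrib, decP; cbv zeta.
  fold (height a0 a1 a2 a) (height a0 a1 a2 b); fold ha hb p.
  destruct (Rlt_dec ha 0); [destruct (Rle_dec 0 hb) | destruct (Rlt_dec hb 0)]; auto;
    destruct (excluded_middle_informative (in_open_tri a0 a1 a2 p)); auto.
  right; left; repeat split; auto; lra.
Qed.

Lemma edge_contrib_crossing a0 a1 a2 a b : edge_contrib a0 a1 a2 a b <> 0%Z ->
  exists l, 0 <= l <= 1 /\ (1 - l) * height a0 a1 a2 a + l * height a0 a1 a2 b = 0 /\
    (height a0 a1 a2 a <> 0 \/ height a0 a1 a2 b <> 0) /\
    in_open_tri a0 a1 a2 (vadd a (vscale l (vsub b a))).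
Proof.
  intros Hne.
  destruct (edge_contrib_cases a0 a1 a2 a b) as [[_ [Ha [Hb Hin]]] | [[_ [Ha [Hb Hin]]] | E]];
    [| | contradiction].
  all: eexists; split; [| split; [| split; [| exact Hin]]].
  all: set (ha := height a0 a1 a2 a) in *; set (hb := height a0 a1 a2 b) in *.
  all: try (field; lra); try lra.
  all: assert (E : ha / (ha - hb) * (ha - hb) = ha) by (field; lra); split; nra.
Qed.

Lemma vseg_0 a b : vadd a (vscale 0 (vsub b a)) = a.
Proof. apply vec_ext; unfold_vecs; ring. Qed.

Lemma vseg_1 a b : vadd a (vscale 1 (vsub b a)) = b.
Proof. apply vec_ext; unfold_vecs; ring. Qed.

Lemma edge_contrib_from_vertex a0 a1 a2 a b :
  a = a0 \/ a = a1 \/ a = a2 -> edge_contrib a0 a1 a2 a b = 0%Z.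
Proof.
  intros Ha. destruct (Z.eq_dec (edge_contrib a0 a1 a2 a b) 0) as [| Hne]; [assumption | exfalso].
  destruct (edge_contrib_crossing _ _ _ _ _ Hne) as [l [_ [Hcross [Hnz Hin]]]].
  rewrite (height_vertex _ _ _ _ Ha) in Hcross, Hnz.
  destruct Hnz as [Hnz | Hb]; [lra |].
  assert (Hl : l = 0) by nra. rewrite Hl, vseg_0 in Hin.
  exact (Hb (height_eq0_of_vertex_in_open_tri _ _ _ _ _ Ha Hin)).
Qed.

Lemma edge_contrib_to_vertex a0 a1 a2 a b :
  b = a0 \/ b = a1 \/ b = a2 -> edge_contrib a0 a1 a2 a b = 0%Z.
Proof.
  intros Hb. destruct (Z.eq_dec (edge_contrib a0 a1 a2 a b) 0) as [| Hne]; [assumption | exfalso].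
  destruct (edge_contrib_crossing _ _ _ _ _ Hne) as [l [_ [Hcross [Hnz Hin]]]].
  rewrite (height_vertex _ _ _ _ Hb) in Hcross, Hnz.
  destruct Hnz as [Ha | Hnz]; [| lra].
  assert (Hl : l = 1) by nra. rewrite Hl, vseg_1 in Hin.
  exact (Ha (height_eq0_of_vertex_in_open_tri _ _ _ _ _ Hb Hin)).
Qed.

Lemma edge_contrib_to_pos a0 a1 a2 a b : 0 < height a0 a1 a2 b ->
  edge_contrib a0 a1 a2 a b = 0%Z \/ edge_contrib a0 a1 a2 a b = 1%Z.
Proof.
  intros Hb. destruct (edge_contrib_cases a0 a1 a2 a b) as [[E _] | [[_ [_ [Hb' _]]] | E]]; auto.
  lra.
Qed.

Lemma edge_contrib_from_pos a0 a1 a2 a b : 0 < height a0 a1 a2 a ->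
  edge_contrib a0 a1 a2 a b = 0%Z \/ edge_contrib a0 a1 a2 a b = (-1)%Z.
Proof.
  intros Ha. destruct (edge_contrib_cases a0 a1 a2 a b) as [[_ [Ha' _]] | [[E _] | E]]; auto.
  lra.
Qed.

Lemma edge_contrib_touch_cancel a0 a1 a2 a m b : height a0 a1 a2 m = 0 ->
  (height a0 a1 a2 a < 0 <-> height a0 a1 a2 b < 0) ->
  (edge_contrib a0 a1 a2 a m + edge_contrib a0 a1 a2 m b)%Z = 0%Z.
Proof.
  intros Hm Hab. unfold edge_contrib; cbv zeta.
  fold (height a0 a1 a2 a) (height a0 a1 a2 m) (height a0 a1 a2 b). rewrite Hm.
  set (ha := height a0 a1 a2 a) in *. set (hb := height a0 a1 a2 b) in *.
  destruct (Rlt_dec 0 0) as [F | _]; [lra |]. destruct (Rle_dec 0 0) as [_ | F]; [| lra].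
  destruct (Rlt_dec ha 0) as [Ha | Ha].
  - destruct (Rlt_dec hb 0) as [_ | F]; [| tauto].
    replace (ha / (ha - 0)) with 1 by (field; lra). replace (0 / (0 - hb)) with 0 by (field; lra).
    rewrite vseg_0, vseg_1. now destruct (decP (in_open_tri a0 a1 a2 m)).
  - destruct (Rlt_dec hb 0); [tauto | reflexivity].
Qed.

Lemma edge_contrib_eq0_z_opposite a0 a1 a2 a b : vz a0 = 0 -> vz a2 = 0 -> vz a1 <> 0 ->
  vz a1 * vz a <= 0 -> vz a1 * vz b <= 0 -> edge_contrib a0 a1 a2 a b = 0%Z.
Proof.
  intros Z0 Z2 Z1 Ha Hb.
  destruct (Z.eq_dec (edge_contrib a0 a1 a2 a b) 0) as [| Hne]; [assumption | exfalso].
  destruct (edge_contrib_crossing _ _ _ _ _ Hne)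
    as [l [Hl [_ [_ [al [be [ga [_ [Hbe [_ [_ Hp]]]]]]]]]]].
  apply (f_equal vz) in Hp. simpl in Hp. rewrite Z0, Z2 in Hp.
  assert (0 < be * (vz a1 * vz a1)) by (apply Rmult_lt_0_compat; [lra | nra]).
  nra.
Qed.

Lemma height_flat_triangle a0 a1 a2 x : vz a0 = 0 -> vz a1 = 0 -> vz a2 = 0 ->
  height a0 a1 a2 x = vz (cross (vsub a1 a0) (vsub a2 a1)) * vz x.
Proof. destruct_vecs; unfold_vecs; intros -> -> ->; ring. Qed.

Lemma height_flat_base a0 a1 a2 x : vz a0 = 0 -> vz a2 = 0 -> vz x = 0 ->
  height a0 a1 a2 x = vz a1 * vz (cross (vsub a2 a0) (vsub x a0)).
Proof. destruct_vecs; unfold_vecs; intros -> -> ->; ring. Qed.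

Lemma edge_contrib_pair_eq0 a0 a1 a2 a m b :
  vz a0 = 0 -> vz a2 = 0 -> vz a1 <= 0 -> vz m = 0 -> 0 < vz a -> 0 < vz b ->
  (edge_contrib a0 a1 a2 a m + edge_contrib a0 a1 a2 m b)%Z = 0%Z.
Proof.
  intros Z0 Z2 Z1 Zm Za Zb. destruct Z1 as [Z1 | Z1].
  - rewrite !(edge_contrib_eq0_z_opposite a0 a1 a2) by (rewrite ?Zm; nra). reflexivity.
  - apply edge_contrib_touch_cancel.
    + rewrite height_flat_triangle, Zm by assumption. ring.
    + rewrite !height_flat_triangle by assumption.
      set (N := vz _). split; intros; nra.
Qed.

Lemma height_cycle a0 a1 a2 x : height a0 a1 a2 x = height a1 a2 a0 x.
Proof. destruct_vecs; unfold_vecs; ring. Qed.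

Lemma vbary_rotate al be ga x y z :
  vadd (vscale al x) (vadd (vscale be y) (vscale ga z)) =
  vadd (vscale ga z) (vadd (vscale al x) (vscale be y)).
Proof. apply vec_ext; unfold_vecs; ring. Qed.

Lemma height_seg_bary a0 a1 a2 b0 b1 l al be ga : al + be + ga = 1 ->
  vadd b0 (vscale l (vsub b1 b0)) = vadd (vscale al a0) (vadd (vscale be a1) (vscale ga a2)) ->
  be * height b0 b1 a0 a1 + ga * height b0 b1 a0 a2 = 0.
Proof.
  intros Hs HP. assert (E := f_equal (height b0 b1 a0) HP).
  rewrite height_seg, height_bary, !(height_vertex b0 b1 a0 a0), !height_vertex in E by auto.
  lra.
Qed.

Lemma det2_eq0_of_common_root a b c d x y :
  a * x + b * y = 0 -> c * x + d * y = 0 -> x <> 0 \/ y <> 0 -> a * d = b * c.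
Proof.
  intros E1 E2 Hxy. apply Rminus_diag_uniq.
  destruct Hxy as [Hx | Hy]; [apply (Rmult_eq_reg_r x) | apply (Rmult_eq_reg_r y)]; auto;
    nsatz_eqs.
Qed.

Lemma vbary_cevian c p q m al be ga : al + be + ga = 1 -> be * m = ga * (1 - m) ->
  vsub (vadd (vscale al c) (vadd (vscale be p) (vscale ga q))) c =
  vscale (be + ga) (vsub (vadd p (vscale m (vsub q p))) c).
Proof. intros Hs K. apply vec_ext; destruct_vecs; unfold_vecs; nsatz. Qed.

Lemma eq_of_mutual_contraction c P Q k t : 0 < k < 1 -> 0 < t < 1 ->
  vsub P c = vscale k (vsub Q c) -> vsub Q c = vscale t (vsub P c) -> P = c.
Proof.
  intros Hk Ht E1 E2. rewrite E2 in E1. destruct_vecs; vec_eq_coords E1.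
  assert (0 < 1 - k * t) by nra.
  apply vec_ext; unfold_vecs; nra.
Qed.

(* Both crossing points lie on the line where the two planes meet, each strictly
   between the shared vertex a0 and the other one. *)
Lemma edge_contrib_no_mutual_crossing a0 a1 a2 b0 b1 :
  edge_contrib a0 a1 a2 b0 b1 <> 0%Z -> edge_contrib b0 b1 a0 a1 a2 <> 0%Z -> False.
Proof.
  intros HA HB.
  destruct (edge_contrib_crossing _ _ _ _ _ HA) as [l [_ [El [NA OA]]]].
  destruct (edge_contrib_crossing _ _ _ _ _ HB) as [m [_ [Em [NB OB]]]].
  set (P := vadd b0 (vscale l (vsub b1 b0))) in *.
  set (Q := vadd a1 (vscale m (vsub a2 a1))) in *.
  destruct OA as [al [be [ga [Hal [Hbe [Hga [Hs HP]]]]]]].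
  destruct OB as [al' [be' [ga' [Hal' [Hbe' [Hga' [Hs' HQ]]]]]]].
  rewrite vbary_rotate in HQ.
  assert (E1 := height_seg_bary _ _ _ _ _ _ _ _ _ Hs HP).
  assert (E2 := height_seg_bary _ _ _ _ _ _ _ _ _ (ltac:(lra) : ga' + al' + be' = 1) HQ).
  rewrite <- (height_cycle a0 a1 a2 b0), <- (height_cycle a0 a1 a2 b1) in E2.
  assert (K := det2_eq0_of_common_root _ _ _ _ _ _ E1 Em NB).
  assert (K' := det2_eq0_of_common_root _ _ _ _ _ _ E2 El NA).
  assert (F := vbary_cevian a0 a1 a2 m al be ga Hs K). rewrite <- HP in F.
  assert (F' := vbary_cevian a0 b0 b1 l ga' al' be' (ltac:(lra)) K'). rewrite <- HQ in F'.
  assert (HP0 : P = a0)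
    by (apply (eq_of_mutual_contraction a0 P Q (be + ga) (al' + be')); auto; lra).
  assert (Ho : in_open_tri a0 a1 a2 P) by (exists al, be, ga; auto).
  rewrite HP0 in Ho.
  destruct NA as [NA | NA];
    exact (NA (height_eq0_of_vertex_in_open_tri _ _ _ _ _ (or_introl eq_refl) Ho)).
Qed.

Lemma triple_seg_bary a0 a1 a2 b0 b1 l al be ga : al + be + ga = 1 ->
  vadd b0 (vscale l (vsub b1 b0)) = vadd (vscale al a0) (vadd (vscale be a1) (vscale ga a2)) ->
  l * triple (vsub a2 a1) (vsub b0 a1) (vsub b1 a1) = - al * height a0 a1 a2 b0.
Proof. intros Hs HP. destruct_vecs; vec_eq_coords HP; nsatz. Qed.

Definition crossing_signs (a0 a1 a2 b0 b1 : vec) : Prop :=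
  height a0 a1 a2 b1 < 0 /\ height b0 b1 a0 a1 < 0 /\
  triple (vsub a2 a1) (vsub b0 a1) (vsub b1 a1) < 0.

Lemma edge_contrib_neg_crossing_signs a0 a1 a2 b0 b1 :
  edge_contrib a0 a1 a2 b0 b1 = (-1)%Z -> 0 < height a0 a1 a2 b0 -> 0 < height b0 b1 a0 a2 ->
  crossing_signs a0 a1 a2 b0 b1.
Proof.
  intros Hec Hb0 Ha2.
  destruct (edge_contrib_cases a0 a1 a2 b0 b1) as [[E _] | [[_ [_ [Hb1 Hin]]] | E]];
    [rewrite Hec in E; discriminate | | rewrite Hec in E; discriminate].
  set (l := height a0 a1 a2 b0 / (height a0 a1 a2 b0 - height a0 a1 a2 b1)) in Hin.
  assert (Hl : 0 < l) by (apply Rdiv_lt_0_compat; lra).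
  destruct Hin as [al [be [ga [Hal [Hbe [Hga [Hs HP]]]]]]].
  assert (E1 := height_seg_bary _ _ _ _ _ _ _ _ _ Hs HP).
  assert (E2 := triple_seg_bary _ _ _ _ _ _ _ _ _ Hs HP).
  split; [lra | split; nra].
Qed.

Lemma crossing_count_pattern (x2 y2 x4 y4 x6 y6 : Z) :
  x2 = 0%Z \/ x2 = 1%Z -> y2 = 0%Z \/ y2 = (-1)%Z ->
  x4 = 0%Z \/ x4 = 1%Z -> y4 = 0%Z \/ y4 = (-1)%Z ->
  x6 = 0%Z \/ x6 = 1%Z -> y6 = 0%Z \/ y6 = (-1)%Z ->
  (y2 <> 0%Z -> x6 <> 0%Z -> False) -> (y4 <> 0%Z -> x2 <> 0%Z -> False) ->
  (y6 <> 0%Z -> x4 <> 0%Z -> False) ->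
  ((x2 + y2) * (x4 + y4) * (x6 + y6) = -1)%Z ->
  y2 = (-1)%Z /\ y4 = (-1)%Z /\ y6 = (-1)%Z.
Proof. intros [-> | ->] [-> | ->] [-> | ->] [-> | ->] [-> | ->] [-> | ->]; lia. Qed.

Lemma vdist_sq a b : vdist a b * vdist a b = dot (vsub a b) (vsub a b).
Proof.
  apply sqrt_sqrt. destruct_vecs; unfold_vecs.
  apply Rplus_le_le_0_compat; [apply Rplus_le_le_0_compat |]; apply Rle_0_sqr.
Qed.

Lemma sqrt_4_sub_sq d : 0 < d < 2 ->
  0 < sqrt (4 - d ^ 2) /\ sqrt (4 - d ^ 2) * sqrt (4 - d ^ 2) = 4 - d * d.
Proof. intros Hd. split; [apply sqrt_lt_R0; nra | rewrite sqrt_sqrt; [ring | nra]]. Qed.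

Lemma perp_toward_flat ax ay bx by_ cx cy L : 0 < L ->
  L * L = (bx - ax) * (bx - ax) + (by_ - ay) * (by_ - ay) ->
  0 < (bx - ax) * (cy - ay) - (by_ - ay) * (cx - ax) ->
  perp_toward (mkv ax ay 0) (mkv bx by_ 0) (mkv cx cy 0) = mkv (- (by_ - ay) / L) ((bx - ax) / L) 0.
Proof.
  intros HL HLL Hcr. set (cr := (bx - ax) * (cy - ay) - (by_ - ay) * (cx - ax)) in *.
  unfold perp_toward; cbv zeta.
  assert (Hbb : dot (vsub (mkv bx by_ 0) (mkv ax ay 0)) (vsub (mkv bx by_ 0) (mkv ax ay 0)) = L * L)
    by (rewrite HLL; unfold_vecs; ring).
  rewrite Hbb.
  set (w := vsub (vsub (mkv cx cy 0) (mkv ax ay 0)) _).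
  assert (Hw : w = mkv (- (by_ - ay) * cr / (L * L)) ((bx - ax) * cr / (L * L)) 0).
  { unfold w; apply vec_ext; unfold_vecs; unfold cr; field_simplify_eq; try lra.
    all: clear Hbb w; clearbody cr; nsatz_eqs. }
  assert (Hn : vnorm w = cr / L).
  { unfold vnorm. rewrite Hw. replace (dot _ _) with ((cr / L) * (cr / L)).
    - apply sqrt_square. apply Rlt_le, Rdiv_lt_0_compat; lra.
    - unfold_vecs. field_simplify_eq; try lra. clear Hw Hbb w. clearbody cr. nsatz_eqs. }
  rewrite Hn, Hw. apply vec_ext; unfold_vecs; field; lra.
Qed.

Section Hexagon.
Variable H : hexagon.
Local Notation v1 := (hv1 H).
Local Notation v2 := (hv2 H).
Local Notation v3 := (hv3 H).
Local Notation v4 := (hv4 H).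
Local Notation v5 := (hv5 H).
Local Notation v6 := (hv6 H).

Ltac drop_edges_at_vertices :=
  unfold Defs.Delta; cbn -[edge_contrib];
  repeat match goal with |- context [edge_contrib ?a0 ?a1 ?a2 ?a ?b] =>
    (rewrite (edge_contrib_from_vertex a0 a1 a2 a b) by now auto) ||
    (rewrite (edge_contrib_to_vertex a0 a1 a2 a b) by now auto) end;
  ring.

Lemma Delta2_eq : Defs.Delta H 2 = (edge_contrib v1 v2 v3 v4 v5 + edge_contrib v1 v2 v3 v5 v6)%Z.
Proof. drop_edges_at_vertices. Qed.

Lemma Delta4_eq : Defs.Delta H 4 = (edge_contrib v3 v4 v5 v6 v1 + edge_contrib v3 v4 v5 v1 v2)%Z.
Proof. drop_edges_at_vertices. Qed.

Lemma Delta6_eq : Defs.Delta H 6 = (edge_contrib v5 v6 v1 v2 v3 + edge_contrib v5 v6 v1 v3 v4)%Z.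
Proof. drop_edges_at_vertices. Qed.

Lemma curl_Delta_of_JCC : JCC H = ((-1)%Z, 1%Z) ->
  curl H = 1%Z /\ (Defs.Delta H 2 * Defs.Delta H 4 * Defs.Delta H 6 = -1)%Z.
Proof.
  unfold JCC; cbv zeta. intros HJ; injection HJ as Hprod Hcurl.
  rewrite !Z.pow_pos_fold in Hcurl.
  replace (Defs.Delta H 2 ^ 2 * Defs.Delta H 4 ^ 2 * Defs.Delta H 6 ^ 2)%Z
    with ((Defs.Delta H 2 * Defs.Delta H 4 * Defs.Delta H 6) ^ 2)%Z in Hcurl by ring.
  rewrite Hprod in Hcurl. split; [lia | assumption].
Qed.

Hypothesis Hstd : standard_position H.

Local Notation base_area := (vz (cross (vsub v3 v1) (vsub v5 v1))).

Lemma std_flat_base : vz v1 = 0 /\ vz v3 = 0 /\ vz v5 = 0.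
Proof. destruct Hstd as [E1 [_ [_ [Z3 [_ Z5]]]]]. now rewrite E1. Qed.

Lemma std_base_area_pos : 0 < base_area.
Proof.
  destruct Hstd as [E1 [X3 [Y3 [_ [Y5 _]]]]]. rewrite E1; unfold_vecs. rewrite Y3. nra.
Qed.

Lemma std_curl_pos : curl H = 1%Z -> 0 < vz v2.
Proof.
  destruct std_flat_base as [Z1 [Z3 Z5]]. pose proof std_base_area_pos as HA.
  assert (E : dot (cross (vsub v3 v1) (vsub v5 v1)) (vsub v2 v1) = base_area * vz v2).
  { revert Z1 Z3 Z5. unfold_vecs. intros -> -> ->. ring. }
  unfold curl, Rsign; rewrite E; intros Hc.
  destruct (Rlt_dec 0 (base_area * vz v2)); [nra | destruct (Rlt_dec _ 0); discriminate].
Qed.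

Lemma std_base_heights :
  height v1 v2 v3 v5 = vz v2 * base_area /\ height v3 v4 v5 v1 = vz v4 * base_area /\
  height v5 v6 v1 v3 = vz v6 * base_area.
Proof.
  destruct std_flat_base as [Z1 [Z3 Z5]].
  rewrite !height_flat_base by assumption. unfold_vecs. repeat split; ring.
Qed.

Lemma std_apexes_above : 0 < vz v2 ->
  Defs.Delta H 2 <> 0%Z -> Defs.Delta H 4 <> 0%Z -> Defs.Delta H 6 <> 0%Z ->
  0 < vz v4 /\ 0 < vz v6.
Proof.
  intros P2 N2 N4 N6. destruct std_flat_base as [Z1 [Z3 Z5]].
  assert (P4_or_P6 : 0 < vz v4 \/ 0 < vz v6).
  { destruct (Rle_or_lt (vz v4) 0), (Rle_or_lt (vz v6) 0); auto. exfalso.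
    apply N2. rewrite Delta2_eq, !(edge_contrib_eq0_z_opposite v1 v2 v3) by (rewrite ?Z5; nra).
    reflexivity. }
  assert (P4_P6 : 0 < vz v4 -> 0 < vz v6).
  { intros P4. destruct (Rle_or_lt (vz v6) 0); auto. exfalso.
    apply N6. rewrite Delta6_eq. now apply edge_contrib_pair_eq0. }
  assert (P6_P4 : 0 < vz v6 -> 0 < vz v4).
  { intros P6. destruct (Rle_or_lt (vz v4) 0); auto. exfalso.
    apply N4. rewrite Delta4_eq. now apply edge_contrib_pair_eq0. }
  tauto.
Qed.

Lemma std_crossing_signs : JCC H = ((-1)%Z, 1%Z) ->
  crossing_signs v1 v2 v3 v5 v6 /\ crossing_signs v3 v4 v5 v1 v2 /\ crossing_signs v5 v6 v1 v3 v4.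
Proof.
  intros HJ. destruct (curl_Delta_of_JCC HJ) as [Hcurl Hprod].
  assert (P2 := std_curl_pos Hcurl).
  destruct (std_apexes_above P2) as [P4 P6]; try (intros E; rewrite E in Hprod; lia).
  pose proof std_base_area_pos as HA. destruct std_base_heights as [B2 [B4 B6]].
  assert (Q2 : 0 < height v1 v2 v3 v5) by (rewrite B2; nra).
  assert (Q4 : 0 < height v3 v4 v5 v1) by (rewrite B4; nra).
  assert (Q6 : 0 < height v5 v6 v1 v3) by (rewrite B6; nra).
  rewrite Delta2_eq, Delta4_eq, Delta6_eq in Hprod.
  destruct (crossing_count_pattern _ _ _ _ _ _
    (edge_contrib_to_pos _ _ _ v4 _ Q2) (edge_contrib_from_pos _ _ _ _ v6 Q2)
    (edge_contrib_to_pos _ _ _ v6 _ Q4) (edge_contrib_from_pos _ _ _ _ v2 Q4)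
    (edge_contrib_to_pos _ _ _ v2 _ Q6) (edge_contrib_from_pos _ _ _ _ v4 Q6)
    (edge_contrib_no_mutual_crossing v1 v2 v3 v5 v6)
    (edge_contrib_no_mutual_crossing v3 v4 v5 v1 v2)
    (edge_contrib_no_mutual_crossing v5 v6 v1 v3 v4) Hprod) as [Y2 [Y4 Y6]].
  split; [| split]; apply edge_contrib_neg_crossing_signs; assumption.
Qed.

Section T135.
Variables t1 t2 t3 : R.
Hypotheses (Haa : aa_defined H) (Hang : is_angles H t1 t2 t3).

Local Notation d1 := (dg1 H).
Local Notation d2 := (dg2 H).
Local Notation d3 := (dg3 H).
Local Notation s1 := (sqrt (4 - d1 ^ 2)).
Local Notation s2 := (sqrt (4 - d2 ^ 2)).
Local Notation s3 := (sqrt (4 - d3 ^ 2)).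
Local Notation X5 := (vx v5).
Local Notation Y5 := (vy v5).

Lemma T135_v135 : v1 = mkv 0 0 0 /\ v3 = mkv d1 0 0 /\ v5 = mkv X5 Y5 0.
Proof.
  destruct Hstd as [E1 [X3 [Y3 [Z3 [_ Z5]]]]].
  set (x3 := vx v3) in *.
  assert (E3 : v3 = mkv x3 0 0) by now apply vec_ext.
  assert (D1 : d1 = x3).
  { unfold dg1, vdist, vnorm. rewrite E1, E3. unfold_vecs.
    replace (_ + _ + _) with (x3 * x3) by ring. apply sqrt_square; lra. }
  rewrite D1. repeat split; [assumption .. | now apply vec_ext].
Qed.

Lemma T135_diagonals :
  d2 * d2 = (X5 - d1) * (X5 - d1) + Y5 * Y5 /\ d3 * d3 = X5 * X5 + Y5 * Y5.
Proof.
  destruct T135_v135 as [E1 [E3 E5]].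
  unfold dg2, dg3. rewrite !vdist_sq, E1, E3, E5. unfold_vecs. split; ring.
Qed.

Lemma T135_lengths : 0 < d1 < 2 /\ 0 < d2 < 2 /\ 0 < d3 < 2 /\ 0 < Y5.
Proof. destruct Haa as [_ [? [? ?]]], Hstd as [_ [_ [_ [_ [? _]]]]]. auto. Qed.

Lemma T135_ddd : ddd d1 d2 d3 = 2 * d1 * Y5.
Proof.
  destruct T135_diagonals as [D2 D3]. destruct T135_lengths as [[D1 _] [_ [_ Y5pos]]].
  unfold ddd. rewrite <- sqrt_square by nra. f_equal. nsatz_eqs.
Qed.

Lemma T135_v246 :
  v2 = mkv (d1 / 2) (s1 / 2 * cos t1) (s1 / 2 * sin t1) /\
  v4 = mkv ((d1 + X5) / 2 - s2 / 2 * cos t2 * Y5 / d2)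
           (Y5 / 2 + s2 / 2 * cos t2 * (X5 - d1) / d2) (s2 / 2 * sin t2) /\
  v6 = mkv (X5 / 2 + s3 / 2 * cos t3 * Y5 / d3)
           (Y5 / 2 - s3 / 2 * cos t3 * X5 / d3) (s3 / 2 * sin t3).
Proof.
  destruct Hang as [_ [_ [_ [A1 [A2 A3]]]]]. destruct T135_v135 as [E1 [E3 E5]].
  destruct T135_diagonals as [D2 D3].
  destruct T135_lengths as [[D1 _] [[D2pos _] [[D3pos _] Y5pos]]].
  unfold angle_rep in A1, A2, A3. rewrite E1, E3, E5 in A1, A2, A3.
  rewrite (perp_toward_flat 0 0 d1 0 X5 Y5 d1) in A1 by (try lra; ring_simplify; nra).
  rewrite (perp_toward_flat d1 0 X5 Y5 0 0 d2) in A2 by (try lra; ring_simplify; nra).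
  rewrite (perp_toward_flat X5 Y5 0 0 d1 0 d3) in A3 by (try lra; ring_simplify; nra).
  rewrite A1, A2, A3. unfold midpoint, e_z.
  repeat split; apply vec_ext; unfold_vecs; field; lra.
Qed.

Ltac T135_identity :=
  cbv zeta; rewrite T135_ddd;
  destruct T135_v135 as [E1 [E3 E5]], T135_v246 as [E2 [E4 E6]];
  destruct T135_diagonals as [D2 D3], T135_lengths as [D1 [D2' [D3' _]]];
  destruct (sqrt_4_sub_sq _ D1) as [S1 S1s], (sqrt_4_sub_sq _ D2') as [S2 S2s],
    (sqrt_4_sub_sq _ D3') as [S3 S3s];
  assert (T1 := sin2_cos2 t1); assert (T2 := sin2_cos2 t2); assert (T3 := sin2_cos2 t3);
  unfold Rsqr in T1, T2, T3;
  set (x5 := vx v5) in *; set (y5 := vy v5) in *;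
  rewrite ?E1, ?E2, ?E3, ?E4, ?E5, ?E6; clear E1 E2 E3 E4 E5 E6;
  set (e1 := d1) in *; set (e2 := d2) in *; set (e3 := d3) in *;
  set (r1 := sqrt (4 - e1 ^ 2)) in *; set (r2 := sqrt (4 - e2 ^ 2)) in *;
  set (r3 := sqrt (4 - e3 ^ 2)) in *;
  clearbody x5 y5 r1 r2 r3 e1 e2 e3;
  unfold_vecs; field_simplify_eq; [nsatz_eqs | repeat split; lra ..].

Lemma g2_height : g2 d1 d2 d3 t1 t2 t3 = - 4 / (d1 * s1) * height v1 v2 v3 v6.
Proof. unfold g2; T135_identity. Qed.
Lemma h3_height : h3 d1 d2 d3 t1 t2 t3 = - 4 / (d1 * s1) * height v1 v2 v3 v4.
Proof. unfold h3; T135_identity. Qed.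
Lemma g3_height : g3 d1 d2 d3 t1 t2 t3 = - 4 / (d2 * s2) * height v3 v4 v5 v2.
Proof. unfold g3; T135_identity. Qed.
Lemma h1_height : h1 d1 d2 d3 t1 t2 t3 = - 4 / (d2 * s2) * height v3 v4 v5 v6.
Proof. unfold h1; T135_identity. Qed.
Lemma g1_height : g1 d1 d2 d3 t1 t2 t3 = - 4 / (d3 * s3) * height v5 v6 v1 v4.
Proof. unfold g1; T135_identity. Qed.
Lemma h2_height : h2 d1 d2 d3 t1 t2 t3 = - 4 / (d3 * s3) * height v5 v6 v1 v2.
Proof. unfold h2; T135_identity. Qed.
Lemma f1_triple :
  f1 d1 d2 d3 t1 t2 t3 = 8 * d2 * d3 * triple (vsub v1 v6) (vsub v3 v6) (vsub v4 v6).
Proof. unfold f1; T135_identity. Qed.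
Lemma f2_triple :
  f2 d1 d2 d3 t1 t2 t3 = 8 * d1 * d3 * triple (vsub v3 v2) (vsub v5 v2) (vsub v6 v2).
Proof. unfold f2; T135_identity. Qed.
Lemma f3_triple :
  f3 d1 d2 d3 t1 t2 t3 = 8 * d1 * d2 * triple (vsub v5 v4) (vsub v1 v4) (vsub v2 v4).
Proof. unfold f3; T135_identity. Qed.

Lemma T135_fgh_signs :
  crossing_signs v1 v2 v3 v5 v6 -> crossing_signs v3 v4 v5 v1 v2 -> crossing_signs v5 v6 v1 v3 v4 ->
  f1 d1 d2 d3 t1 t2 t3 < 0 /\ f2 d1 d2 d3 t1 t2 t3 < 0 /\ f3 d1 d2 d3 t1 t2 t3 < 0 /\
  g1 d1 d2 d3 t1 t2 t3 > 0 /\ g2 d1 d2 d3 t1 t2 t3 > 0 /\ g3 d1 d2 d3 t1 t2 t3 > 0 /\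
  h1 d1 d2 d3 t1 t2 t3 > 0 /\ h2 d1 d2 d3 t1 t2 t3 > 0 /\ h3 d1 d2 d3 t1 t2 t3 > 0.
Proof.
  intros [G2 [H2 F2]] [G3 [H3 F3]] [G1 [H1 F1]].
  rewrite f1_triple, f2_triple, f3_triple, g1_height, g2_height, g3_height,
    h1_height, h2_height, h3_height.
  destruct T135_lengths as [D1 [D2 [D3 _]]].
  destruct (sqrt_4_sub_sq _ D1) as [S1 _], (sqrt_4_sub_sq _ D2) as [S2 _],
    (sqrt_4_sub_sq _ D3) as [S3 _].
  assert (K1 : 0 < 4 / (d1 * s1)) by (apply Rdiv_lt_0_compat; nra).
  assert (K2 : 0 < 4 / (d2 * s2)) by (apply Rdiv_lt_0_compat; nra).
  assert (K3 : 0 < 4 / (d3 * s3)) by (apply Rdiv_lt_0_compat; nra).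
  assert (K12 : 0 < 8 * d1 * d2) by nra. assert (K13 : 0 < 8 * d1 * d3) by nra.
  assert (K23 : 0 < 8 * d2 * d3) by nra.
  unfold Rdiv in *. repeat split; nra.
Qed.
End T135.
End Hexagon.

Theorem mainTheorem8 (H : hexagon) (t1 t2 t3 : R) :
  equilateral H -> embedded H -> standard_position H -> aa_defined H ->
  is_angles H t1 t2 t3 ->
  JCC H = ((-1)%Z, 1%Z) ->
  let d1 := dg1 H in let d2 := dg2 H in let d3 := dg3 H in
  f1 d1 d2 d3 t1 t2 t3 < 0 /\ f2 d1 d2 d3 t1 t2 t3 < 0 /\ f3 d1 d2 d3 t1 t2 t3 < 0 /\
  g1 d1 d2 d3 t1 t2 t3 > 0 /\ g2 d1 d2 d3 t1 t2 t3 > 0 /\ g3 d1 d2 d3 t1 t2 t3 > 0 /\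
  h1 d1 d2 d3 t1 t2 t3 > 0 /\ h2 d1 d2 d3 t1 t2 t3 > 0 /\ h3 d1 d2 d3 t1 t2 t3 > 0.
Proof.
  intros _ _ Hstd Haa Hang HJ. cbv zeta.
  destruct (std_crossing_signs H Hstd HJ) as [C2 [C4 C6]].
  exact (T135_fgh_signs H Hstd t1 t2 t3 Haa Hang C2 C4 C6).
Qed.
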